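(* Let $p\ge5$ be prime, $a\in\mathbb{C}_p$, $a\ne0$, $A=|a|_p$, $f(x)=\frac{ax}{x^2+a}$, and $t_1=\sqrt{-2a}$, $t_2=-\sqrt{-2a}$. Then for every $0<r<\sqrt A$, $$f(S_r(t_1)\setminus\mathcal P_2)\subseteq S_r(t_2),\qquad f(S_r(t_2)\setminus\mathcal P_2)\subseteq S_r(t_1).$$
   Context: $S_r(t)=\{x\in\mathbb{C}_p:|x-t|_p=r\}$. $\mathcal P_2=\{x\in\mathbb{C}_p:\exists n\in\mathbb{N},\ f^n(x)\in\{\pm\sqrt{-a},\ \pm\sqrt{(-3\pm\sqrt5)a/2}\}\}$. The points $t_1,t_2$ form a $2$-cycle of $f$. *)

From Stdlib Require Import Reals.
From HB Require Import structures.
From mathcomp Require Import all_boot all_order all_algebra all_field.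
Set Implicit Arguments. Unset Strict Implicit. Unset Printing Implicit Defensive.
Import GRing.Theory.
Local Open Scope ring_scope.

(* Axiomatic characterization of (C_p, |.|_p) up to isometric isomorphism:
   an algebraically closed field K with a non-archimedean absolute value
   restricting to the p-adic absolute value on Q, complete, and in which the
   algebraic closure of Q is dense.  Any such K is isometrically isomorphic to C_p. *)
Definition is_Cp (p : nat) (K : closedFieldType) (absp : K -> R) : Prop :=
  (forall x : K, absp x = R0 <-> x = 0) /\
      (forall x y : K, absp (x * y) = Rmult (absp x) (absp y)) /\
      (forall x y : K, Rle (absp (x + y)) (Rmax (absp x) (absp y))) /\
      absp (p%:R) = Rinv (INR p) /\
      (forall m : nat, coprime m p -> absp (m%:R) = R1) /\
      (forall u : nat -> K,
          (forall eps, Rlt R0 eps -> exists N : nat, forall m n : nat,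
              (N <= m)%N -> (N <= n)%N -> Rlt (absp (u m - u n)) eps) ->
          exists l : K, forall eps, Rlt R0 eps -> exists N : nat, forall n : nat,
              (N <= n)%N -> Rlt (absp (u n - l)) eps) /\
      (forall (x : K) eps, Rlt R0 eps -> exists y : K,
          (exists q : {poly rat}, q != 0 /\ root (map_poly ratr q) y) /\
          Rlt (absp (x - y)) eps).

(* f(x) = a x / (x^2 + a)  (MathComp's total division: value 0 at the poles,
   which are themselves in P_2, so this never matters). *)
Definition fCp (K : fieldType) (a x : K) : K := a * x / (x ^+ 2 + a).

Definition P2_targets (K : fieldType) (a y : K) : Prop :=
  y ^+ 2 = - a \/
  exists w : K, w ^+ 2 = 5%:R /\
    (y ^+ 2 = (- 3%:R + w) * a / 2%:R \/ y ^+ 2 = (- 3%:R - w) * a / 2%:R).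

Definition P2 (K : fieldType) (a x : K) : Prop :=
  exists n : nat, P2_targets a (iter n (fCp a) x).

Definition sphere (K : fieldType) (absp : K -> R) (r : R) (t x : K) : Prop :=
  absp (x - t) = r.

From Stdlib Require Import Reals Lra.
From HB Require Import structures.
From mathcomp Require Import all_boot all_order all_algebra all_field.
From mathcomp Require Import ring.
Set Implicit Arguments. Unset Strict Implicit.
Local Open Scope ring_scope.
Import GRing.Theory.

(* Write x = t + h with |h| = r.  Using t^2 = -2a,
     f(x) + t = h (t h - 3a) / (h (2t + h) - a).
   Since |t| = sqrt|a| and r < sqrt|a|, the terms t h and h (2t + h) are
   strictly smaller than |a|, so by the ultrametric inequality numerator and
   denominator have absolute values r|a| and |a|: hence |f(x) + t| = r. *)

Section UltrametricAbs.

Variables (K : closedFieldType) (absp : K -> R).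
Hypothesis abs_eq0 : forall x : K, absp x = R0 <-> x = 0.
Hypothesis absM : forall x y : K, absp (x * y) = Rmult (absp x) (absp y).
Hypothesis abs_ultra : forall x y : K, Rle (absp (x + y)) (Rmax (absp x) (absp y)).

Lemma abs1 : absp 1 = R1.
Proof.
have abs11 := absM 1 1; rewrite mulr1 in abs11.
have abs1_neq0 : absp 1 <> R0 by move/abs_eq0/eqP; rewrite oner_eq0.
by apply: (Rmult_eq_reg_l (absp 1)) => //; rewrite -abs11 Rmult_1_r.
Qed.

(* Every element of an algebraically closed field is a square. *)
Lemma abs_ge0 (x : K) : Rle R0 (absp x).
Proof.
have [y] := @GRing.solve_monicpoly K 2 (fun i => if i == 0%N then x else 0) isT.
rewrite !big_ord_recl big_ord0 /= expr0 mulr1 mul0r !addr0 expr2 => <-.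
by rewrite absM; apply: Rle_0_sqr.
Qed.

Lemma absN (x : K) : absp (- x) = absp x.
Proof.
have absN1_sqr : Rmult (absp (-1)) (absp (-1)) = R1 by rewrite -absM mulrNN mulr1 abs1.
have absN1 : absp (-1) = R1 by have := abs_ge0 (-1); nra.
by rewrite -mulN1r absM absN1 Rmult_1_l.
Qed.

Lemma abs_add_lt (x y : K) (c : R) :
  Rlt (absp x) c -> Rlt (absp y) c -> Rlt (absp (x + y)) c.
Proof. by have := abs_ultra x y; rewrite /Rmax; case: Rle_dec; lra. Qed.

Lemma abs_add_eq_l (x y : K) : Rlt (absp y) (absp x) -> absp (x + y) = absp x.
Proof.
have := abs_ultra x y; have := abs_ultra (x + y) (- y).
by rewrite addrK absN /Rmax; do 2 case: Rle_dec; lra.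
Qed.

Lemma abs_div (x y : K) : y != 0 -> Rmult (absp (x / y)) (absp y) = absp x.
Proof. by move=> y_neq0; rewrite -absM mulfVK. Qed.

End UltrametricAbs.

Lemma abs_natr_lt (p : nat) (K : fieldType) (absp : K -> R) (hp : prime p)
  (abs_coprime : forall m : nat, coprime m p -> absp m%:R = R1) (m : nat) :
  (0 < m < p)%N -> absp m%:R = R1.
Proof.
case/andP=> m_gt0 m_ltp; apply: abs_coprime.
rewrite coprime_sym prime_coprime //; apply/negP => /(dvdn_leq m_gt0).
by rewrite leqNgt m_ltp.
Qed.

Lemma fCp_den_shift (K : comNzRingType) (a t h : K) : t ^+ 2 = - (2%:R * a) ->
  (t + h) ^+ 2 + a = h * (2%:R * t + h) - a.
Proof.
move=> ht; have -> : (t + h) ^+ 2 + a = h * (2%:R * t + h) - a + (t ^+ 2 + 2%:R * a).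
  by ring.
by rewrite ht addNr addr0.
Qed.

Lemma fCp_num_shift (K : comNzRingType) (a t h : K) : t ^+ 2 = - (2%:R * a) ->
  a * (t + h) + t * ((t + h) ^+ 2 + a) = h * (t * h - 3%:R * a).
Proof.
move=> ht; have -> : a * (t + h) + t * ((t + h) ^+ 2 + a) =
    h * (t * h - 3%:R * a) + (t + 2%:R * h) * (t ^+ 2 + 2%:R * a) by ring.
by rewrite ht addNr mulr0 addr0.
Qed.

Section SphereSwap.

Variables (K : closedFieldType) (absp : K -> R).
Hypothesis abs_eq0 : forall x : K, absp x = R0 <-> x = 0.
Hypothesis absM : forall x y : K, absp (x * y) = Rmult (absp x) (absp y).
Hypothesis abs_ultra : forall x y : K, Rle (absp (x + y)) (Rmax (absp x) (absp y)).
Hypotheses (abs2 : absp 2%:R = R1) (abs3 : absp 3%:R = R1).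

Variables (a t : K).
Hypotheses (a_neq0 : a != 0) (ht : t ^+ 2 = - (2%:R * a)).

Let absN := absN abs_eq0 absM.
Let abs_ge0 := abs_ge0 absM.
Let abs_add_lt := abs_add_lt abs_ultra.
Let abs_add_eq_l := abs_add_eq_l abs_eq0 absM abs_ultra.

Lemma abs_t_sqrt : absp t = sqrt (absp a).
Proof.
have abs_t_sqr : Rmult (absp t) (absp t) = absp a.
  by rewrite -absM -expr2 ht absN absM abs2 Rmult_1_l.
by rewrite -abs_t_sqr sqrt_square.
Qed.

Lemma fCp_sphere_swap (r : R) (x : K) :
  Rlt R0 r -> Rlt r (sqrt (absp a)) -> absp (x - t) = r -> absp (fCp a x + t) = r.
Proof.
move=> r_gt0 r_lt hx; set h := x - t; have -> : x = t + h by rewrite subrKC.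
set A := absp a.
have A_gt0 : Rlt R0 A.
  have : A <> R0 by move/abs_eq0/eqP; apply/negP.
  by have := abs_ge0 a; rewrite -/A; lra.
have sA_gt0 := sqrt_lt_R0 _ A_gt0.
have sA_sqr := sqrt_sqrt _ (Rlt_le _ _ A_gt0).
have r_sA_lt : Rlt (Rmult r (sqrt A)) A.
  by have := Rmult_lt_compat_l (sqrt A) r (sqrt A) sA_gt0 r_lt; lra.
have th_lt : Rlt (absp (t * h)) A by rewrite absM abs_t_sqrt -/A hx; lra.
have hh_lt : Rlt (absp (h * h)) A.
  by rewrite absM hx; have := Rmult_lt_compat_r r r (sqrt A) r_gt0 r_lt; lra.
have den_lt : Rlt (absp (h * (2%:R * t + h))) A.
  rewrite mulrDr; apply: abs_add_lt => //.
  by rewrite mulrCA absM abs2 Rmult_1_l mulrC.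
have abs_den : absp (h * (2%:R * t + h) - a) = A.
  by rewrite addrC abs_add_eq_l ?absN.
have abs_3a : absp (3%:R * a) = A by rewrite absM abs3 Rmult_1_l.
have abs_num : absp (h * (t * h - 3%:R * a)) = Rmult r A.
  by rewrite absM hx addrC abs_add_eq_l ?absN ?abs_3a.
have den_neq0 : h * (2%:R * t + h) - a != 0.
  by apply/negP => /eqP/abs_eq0; rewrite abs_den; lra.
have := abs_div absM (h * (t * h - 3%:R * a)) den_neq0.
rewrite abs_den abs_num -(fCp_num_shift h ht) -(fCp_den_shift h ht).
rewrite /fCp mulrDl mulfK ?fCp_den_shift //.
by move/(Rmult_eq_reg_r A) => -> //; lra.
Qed.

End SphereSwap.

Theorem theorem4p4 (p : nat) (K : closedFieldType) (absp : K -> R)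
  (hp : prime p) (hp5 : (5 <= p)%N) (hK : is_Cp p absp)
  (a t1 t2 : K) (ha : a != 0)
  (ht1 : t1 ^+ 2 = - (2%:R * a)) (ht2 : t2 = - t1) :
  forall r : R, Rlt R0 r -> Rlt r (sqrt (absp a)) ->
    (forall x : K, sphere absp r t1 x -> ~ P2 a x -> sphere absp r t2 (fCp a x)) /\
    (forall x : K, sphere absp r t2 x -> ~ P2 a x -> sphere absp r t1 (fCp a x)).
Proof.
case: hK => abs_eq0 [absM [abs_ultra [_ [abs_coprime _]]]].
have abs_small m : (0 < m < 5)%N -> absp m%:R = R1.
  by case/andP=> m_gt0 m_lt5; apply: (abs_natr_lt hp abs_coprime);
     rewrite m_gt0 (leq_trans m_lt5 hp5).
have swap := fCp_sphere_swap abs_eq0 absM abs_ultra (abs_small 2 isT) (abs_small 3 isT).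
have ht2' : t2 ^+ 2 = - (2%:R * a) by rewrite ht2 sqrrN.
move=> r r_gt0 r_lt; rewrite /sphere; split => x hx _.
  rewrite ht2 opprK; exact: (swap _ _ ha ht1 _ _ r_gt0 r_lt hx).
rewrite -ht2; exact: (swap _ _ ha ht2' _ _ r_gt0 r_lt hx).
Qed.
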